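(* For every real $r\ge0$, the sphere $\{Y\in\mathcal{M}: d_{GH}(\Delta_1,Y)=r\}$ in the Gromov–Hausdorff space $\mathcal{M}$ is path connected (as a subspace of the metric space $(\mathcal{M},d_{GH})$).
   Context: $\mathcal{M}$ denotes the set of isometry classes of compact metric spaces endowed with the Gromov–Hausdorff distance $d_{GH}$ (a metric on $\mathcal{M}$): $d_{GH}(X,Y)$ is the infimum of $r$ such that there exist a metric space $Z$ and subsets $X',Y'\subset Z$ isometric to $X,Y$ with Hausdorff distance $d_H(X',Y')\le r$. $\Delta_1$ is the single-point metric space. *)

From Stdlib Require Import Reals Lra.
Open Scope R_scope.

Record MetricSpace := {
  mcarrier :> Type;
  mdist : mcarrier -> mcarrier -> R;
  mdist_eq0 : forall x y, mdist x y = 0 <-> x = y;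
  mdist_sym : forall x y, mdist x y = mdist y x;
  mdist_tri : forall x y z, mdist x z <= mdist x y + mdist y z
}.
Arguments mdist {m} _ _.

Definition compact_space (X : MetricSpace) : Prop :=
  forall u : nat -> X, exists phi : nat -> nat,
    (forall n, (phi n < phi (S n))%nat) /\
    exists l : X, forall eps, 0 < eps -> exists N, forall n, (N <= n)%nat ->
      mdist (u (phi n)) l < eps.

(** Nonempty compact metric spaces (the elements of M, up to isometry). *)
Record CMS := {
  cms_space :> MetricSpace;
  cms_inhabited : inhabited cms_space;
  cms_compact : compact_space cms_space
}.

Definition isometric_embedding {X Z : MetricSpace} (f : X -> Z) : Prop :=
  forall a b, mdist (f a) (f b) = mdist a b.

(** Isometry (equality in M). *)
Definition isometric (X Y : MetricSpace) : Prop :=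
  exists (f : X -> Y) (g : Y -> X),
    isometric_embedding f /\ (forall x, g (f x) = x) /\ (forall y, f (g y) = y).

(** d_H(A,B) <= r for A,B subsets of Z (unfolding sup/inf). *)
Definition hausdorff_le {Z : MetricSpace} (A B : Z -> Prop) (r : R) : Prop :=
  (forall a, A a -> forall eps, 0 < eps -> exists b, B b /\ mdist a b < r + eps) /\
  (forall b, B b -> forall eps, 0 < eps -> exists a, A a /\ mdist a b < r + eps).

Definition GH_admissible (X Y : MetricSpace) (r : R) : Prop :=
  exists (Z : MetricSpace) (f : X -> Z) (g : Y -> Z),
    isometric_embedding f /\ isometric_embedding g /\
    hausdorff_le (fun z => exists x, z = f x) (fun z => exists y, z = g y) r.

Definition is_glb (S : R -> Prop) (m : R) : Prop :=
  (forall r, S r -> m <= r) /\ (forall m', (forall r, S r -> m' <= r) -> m' <= m).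

Definition is_GH_dist (X Y : MetricSpace) (d : R) : Prop :=
  is_glb (GH_admissible X Y) d.

Definition unit_metric : MetricSpace.
Proof.
  refine {| mcarrier := unit; mdist := fun _ _ => 0 |}.
  - intros [] []; split; auto.
  - auto.
  - intros; lra.
Defined.

Lemma unit_compact : compact_space unit_metric.
Proof.
  intros u. exists (fun n => n). split; [intros; auto|].
  exists tt. intros eps He. exists O. intros n _. simpl. exact He.
Qed.

Definition Delta1 : CMS :=
  {| cms_space := unit_metric; cms_inhabited := inhabits tt;
     cms_compact := unit_compact |}.

Definition GH_path (S : CMS -> Prop) (X Y : CMS) : Prop :=
  exists gamma : R -> CMS,
    isometric (gamma 0) X /\ isometric (gamma 1) Y /\
    (forall t, 0 <= t <= 1 -> S (gamma t)) /\
    (forall t, 0 <= t <= 1 -> forall eps, 0 < eps -> exists delta, 0 < delta /\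
       forall s, 0 <= s <= 1 -> Rabs (s - t) < delta ->
         exists d, is_GH_dist (gamma s) (gamma t) d /\ d < eps).

(* d_GH(Delta1, W) is half the diameter of W, so the sphere of radius r consists
   of the spaces of diameter 2r.  Given two of them, X and Y, glue X scaled by a
   and Y scaled by b along the cross distance
     min (2r, a d(x, x0) + b d(y, y0) + min(a, b) r).
   For a, b <= 1 with a = 1 or b = 1 this space has diameter 2r again, it depends
   continuously on (a, b), and it tends to X as b -> 0 (a = 1) and to Y as a -> 0
   (b = 1).  Moving first b from 0 to 1 and then a from 1 to 0 gives the path. *)
From Stdlib Require Import Reals Lra Lia ClassicalEpsilon Classical.
Open Scope R_scope.

Lemma mdist_refl (X : MetricSpace) (p : X) : mdist p p = 0.
Proof. now apply (mdist_eq0 X). Qed.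

Lemma mdist_nonneg (X : MetricSpace) (p q : X) : 0 <= mdist p q.
Proof.
  pose proof (mdist_tri X p q p) as T.
  rewrite (mdist_sym X q p), mdist_refl in T. lra.
Qed.

(** * Gluing two metric spaces *)

Definition glue_dist (X Y : MetricSpace) (a b : R) (c : X -> Y -> R) (p q : X + Y) : R :=
  match p, q with
  | inl x, inl x' => a * mdist x x'
  | inr y, inr y' => b * mdist y y'
  | inl x, inr y | inr y, inl x => c x y
  end.

Definition glue_compatible (X Y : MetricSpace) (a b : R) (c : X -> Y -> R) : Prop :=
  0 < a /\ 0 < b /\ (forall x y, 0 < c x y) /\
  (forall x x' y, c x y <= a * mdist x x' + c x' y) /\
  (forall x y y', c x y <= b * mdist y y' + c x y') /\
  (forall x x' y, a * mdist x x' <= c x y + c x' y) /\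
  (forall x y y', b * mdist y y' <= c x y + c x y').

Section Gluing.
Variables (X Y : MetricSpace) (a b : R) (c : X -> Y -> R).
Hypothesis compat : glue_compatible X Y a b c.

Lemma glue_dist_eq0 (p q : X + Y) : glue_dist X Y a b c p q = 0 <-> p = q.
Proof.
  destruct compat as [Ha [Hb [Hc _]]].
  destruct p as [x|y], q as [x'|y']; simpl; split; intro E; try discriminate.
  - apply Rmult_integral in E as [E|E]; [lra|].
    now apply (mdist_eq0 X) in E as ->.
  - injection E as ->. rewrite mdist_refl. ring.
  - specialize (Hc x y'). lra.
  - specialize (Hc x' y). lra.
  - apply Rmult_integral in E as [E|E]; [lra|].
    now apply (mdist_eq0 Y) in E as ->.
  - injection E as ->. rewrite mdist_refl. ring.
Qed.

Lemma glue_dist_sym (p q : X + Y) : glue_dist X Y a b c p q = glue_dist X Y a b c q p.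
Proof.
  destruct p as [x|y], q as [x'|y']; simpl; try reflexivity.
  - now rewrite (mdist_sym X x x').
  - now rewrite (mdist_sym Y y y').
Qed.

Lemma glue_dist_tri (p q z : X + Y) :
  glue_dist X Y a b c p z <= glue_dist X Y a b c p q + glue_dist X Y a b c q z.
Proof.
  destruct compat as [Ha [Hb [_ [H1 [H2 [H3 H4]]]]]].
  destruct p as [x|y], q as [x'|y'], z as [x''|y'']; simpl.
  - pose proof (mdist_tri X x x' x''). nra.
  - apply H1.
  - apply H3.
  - rewrite Rplus_comm, (mdist_sym Y). apply H2.
  - rewrite Rplus_comm, (mdist_sym X). apply H1.
  - apply H4.
  - apply H2.
  - pose proof (mdist_tri Y y y' y''). nra.
Qed.

Definition glue_space : MetricSpace :=
  {| mcarrier := (X + Y)%type; mdist := glue_dist X Y a b c;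
     mdist_eq0 := glue_dist_eq0; mdist_sym := glue_dist_sym;
     mdist_tri := glue_dist_tri |}.

End Gluing.

Definition has_convergent_subseq (M : MetricSpace) (u : nat -> M) : Prop :=
  exists phi : nat -> nat, (forall n, (phi n < phi (S n))%nat) /\
    exists l : M, forall eps, 0 < eps -> exists N, forall n, (N <= n)%nat ->
      mdist (u (phi n)) l < eps.

Lemma strictly_increasing_lt (f : nat -> nat) : (forall n, (f n < f (S n))%nat) ->
  forall m n, (m < n)%nat -> (f m < f n)%nat.
Proof.
  intros Hf m n. induction n as [|n IH]; intros Hmn; [lia|].
  destruct (Nat.eq_dec m n) as [->|Hne]; [apply Hf|].
  specialize (IH ltac:(lia)). specialize (Hf n). lia.
Qed.

Lemma infinitely_often_subseq (P : nat -> Prop) :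
  (forall N, exists n, (N <= n)%nat /\ P n) ->
  exists psi : nat -> nat, (forall n, (psi n < psi (S n))%nat) /\ forall n, P (psi n).
Proof.
  intros H.
  pose (next N := proj1_sig (constructive_indefinite_description _ (H N))).
  assert (Hnext : forall N, (N <= next N)%nat /\ P (next N))
    by (intros N; exact (proj2_sig (constructive_indefinite_description _ (H N)))).
  exists (fix psi n := match n with O => next O | S k => next (S (psi k)) end).
  split.
  - intros n. simpl. match goal with |- (?m < next (S ?m))%nat =>
      destruct (Hnext (S m)); lia end.
  - intros [|n]; apply Hnext.
Qed.

Lemma has_convergent_subseq_of_scaled_copy (X M : MetricSpace) (j : X -> M) (a : R) :
  0 < a -> (forall p q, mdist (j p) (j q) = a * mdist p q) -> compact_space X ->
  forall u : nat -> M, (forall N, exists n, (N <= n)%nat /\ exists x, u n = j x) ->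
  has_convergent_subseq M u.
Proof.
  intros Ha Hj CX u Hu.
  destruct (infinitely_often_subseq _ Hu) as [psi [Hpsi Hv]].
  pose (v k := proj1_sig (constructive_indefinite_description _ (Hv k))).
  assert (Euv : forall k, u (psi k) = j (v k))
    by (intros k; exact (proj2_sig (constructive_indefinite_description _ (Hv k)))).
  destruct (CX v) as [phi [Hphi [l Hl]]].
  exists (fun n => psi (phi n)). split.
  { intros n. now apply strictly_increasing_lt. }
  exists (j l). intros eps He.
  destruct (Hl (eps / a)) as [N HN]; [apply Rdiv_lt_0_compat; lra|].
  exists N. intros n Hn. rewrite Euv, Hj.
  specialize (HN n Hn). apply (Rmult_lt_compat_l a) in HN; [|lra].
  replace (a * (eps / a)) with eps in HN by (field; lra). exact HN.
Qed.

Lemma glue_compact X Y a b c (compat : glue_compatible X Y a b c) :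
  compact_space X -> compact_space Y -> compact_space (glue_space X Y a b c compat).
Proof.
  intros CX CY u. pose proof compat as [Ha [Hb _]].
  destruct (classic (forall N, exists n, (N <= n)%nat /\ exists x, u n = inl x)) as [HL|HL].
  - exact (has_convergent_subseq_of_scaled_copy X (glue_space X Y a b c compat)
             inl a Ha (fun p q => eq_refl) CX u HL).
  - apply (has_convergent_subseq_of_scaled_copy Y (glue_space X Y a b c compat)
             inr b Hb (fun p q => eq_refl) CY u).
    apply not_all_ex_not in HL as [N0 HN0].
    intros N. exists (Nat.max N N0). split; [lia|].
    destruct (u (Nat.max N N0)) as [x|y] eqn:E; [|eauto].
    exfalso. apply HN0. exists (Nat.max N N0). split; [lia|eauto].
Qed.

Definition glue_cms (X Y : CMS) a b c (compat : glue_compatible X Y a b c) (x0 : X) : CMS :=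
  {| cms_space := glue_space X Y a b c compat; cms_inhabited := inhabits (inl x0);
     cms_compact := glue_compact X Y a b c compat (cms_compact X) (cms_compact Y) |}.

Lemma isometric_refl (X : MetricSpace) : isometric X X.
Proof. exists (fun x => x), (fun x => x). repeat split. Qed.

Lemma GH_admissible_sym (X Y : MetricSpace) s :
  GH_admissible X Y s -> GH_admissible Y X s.
Proof.
  intros [Z [f [g [Hf [Hg [H1 H2]]]]]].
  exists Z, g, f. repeat split; auto.
  - intros p Hp e He. destruct (H2 p Hp e He) as [q [Hq Hd]].
    exists q. rewrite mdist_sym. auto.
  - intros q Hq e He. destruct (H1 q Hq e He) as [p [Hp Hd]].
    exists p. rewrite mdist_sym. auto.
Qed.

Lemma GH_admissible_nonneg (X Y : MetricSpace) s :
  inhabited X -> GH_admissible X Y s -> 0 <= s.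
Proof.
  intros [x0] [Z [f [g [_ [_ [H1 _]]]]]].
  apply Rle_plus_epsilon. intros e He.
  destruct (H1 (f x0) (ex_intro _ x0 eq_refl) e He) as [z [_ Hz]].
  pose proof (mdist_nonneg Z (f x0) z). lra.
Qed.

Lemma GH_dist_exists_le (X Y : MetricSpace) s :
  inhabited X -> GH_admissible X Y s -> exists d, is_GH_dist X Y d /\ d <= s.
Proof.
  intros HX Hs.
  pose (lower m := forall s', GH_admissible X Y s' -> m <= s').
  destruct (completeness lower) as [l [Hub Hl]].
  - exists s. intros m Hm. now apply Hm.
  - exists 0. intros s' H. eapply GH_admissible_nonneg; eauto.
  - exists l. split; [split|].
    + intros s' Hs'. apply Hl. intros m Hm. now apply Hm.
    + exact Hub.
    + apply Hl. intros m Hm. now apply Hm.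
Qed.

Lemma GH_dist_lt_of_admissible (X Y : CMS) s eps :
  GH_admissible X Y s -> s < eps -> exists d, is_GH_dist X Y d /\ d < eps.
Proof.
  intros Hs Hlt.
  destruct (GH_dist_exists_le X Y s (cms_inhabited X) Hs) as [d [Hd Hds]].
  exists d. split; [exact Hd|lra].
Qed.

Lemma GH_admissible_of_embedding (X W : MetricSpace) (f : X -> W) s :
  isometric_embedding f -> 0 <= s -> (forall w, exists x, mdist (f x) w <= s) ->
  GH_admissible X W s.
Proof.
  intros Hf Hs Hw. exists W, f, (fun w => w). repeat split; [exact Hf| |].
  - intros p [x ->] e He. exists (f x). split; [eauto|]. rewrite mdist_refl. lra.
  - intros w [w' ->] e He. destruct (Hw w') as [x Hx]. exists (f x). split; [eauto|lra].
Qed.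

(* Glue M1 and M2 along [c p q := s + d(p, k q)]; the hypothesis that [h] expands
   distances by at most [s] is exactly what the triangle inequalities need. *)
Lemma GH_admissible_of_expanding_bijection (M1 M2 : MetricSpace)
    (h : M1 -> M2) (k : M2 -> M1) s :
  (forall p, k (h p) = p) -> (forall q, h (k q) = q) -> 0 < s ->
  (forall p q, mdist p q <= mdist (h p) (h q) <= mdist p q + s) ->
  GH_admissible M1 M2 s.
Proof.
  intros hk kh Hs Hh.
  assert (compat : glue_compatible M1 M2 1 1 (fun p q => s + mdist p (k q))).
  { repeat split; try lra.
    - intros p q. pose proof (mdist_nonneg _ p (k q)). lra.
    - intros p p' q. pose proof (mdist_tri _ p p' (k q)). lra.
    - intros p q q'. pose proof (mdist_tri _ p (k q') (k q)).
      destruct (Hh (k q') (k q)) as [Hexp _]. rewrite !kh, (mdist_sym M2 q' q) in Hexp.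
      lra.
    - intros p p' q. pose proof (mdist_tri _ p (k q) p') as T.
      rewrite (mdist_sym _ (k q) p') in T. lra.
    - intros p q q'. destruct (Hh (k q) (k q')) as [_ Hexp]. rewrite !kh in Hexp.
      pose proof (mdist_tri _ (k q) p (k q')) as T.
      rewrite (mdist_sym _ (k q) p) in T. lra. }
  exists (glue_space M1 M2 1 1 _ compat), inl, inr.
  repeat split; try (intros p q; simpl; ring).
  - intros z [p ->] e He. exists (inr (h p)). split; [eauto|]. simpl.
    rewrite hk, mdist_refl. lra.
  - intros z [q ->] e He. exists (inl (k q)). split; [eauto|]. simpl.
    rewrite mdist_refl. lra.
Qed.

Lemma GH_dist_self_lt (X : CMS) eps : 0 < eps -> exists d, is_GH_dist X X d /\ d < eps.
Proof.
  intros He. apply (GH_dist_lt_of_admissible X X (eps / 2)); [|lra].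
  apply (GH_admissible_of_embedding X X (fun x => x)); [now intros p q|lra|].
  intros w. exists w. rewrite mdist_refl. lra.
Qed.

Definition GH_continuous_at (gamma : R -> CMS) (t : R) : Prop :=
  forall eps, 0 < eps -> exists delta, 0 < delta /\
    forall s, 0 <= s <= 1 -> Rabs (s - t) < delta ->
      exists d, is_GH_dist (gamma s) (gamma t) d /\ d < eps.

Lemma GH_path_of_isometric (S : CMS -> Prop) (X Y : CMS) :
  S X -> isometric X Y -> GH_path S X Y.
Proof.
  intros HS Hiso. exists (fun _ => X). repeat split; auto using isometric_refl.
  intros t _ eps He. exists 1. split; [lra|]. intros. now apply GH_dist_self_lt.
Qed.

(** * Distance to the one-point space *)

Definition is_diameter (W : MetricSpace) (D : R) : Prop :=
  (forall p q : W, mdist p q <= D) /\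
  (forall e, 0 < e -> exists p q : W, D - e < mdist p q).

Lemma GH_admissible_point_diam_le (W : MetricSpace) s :
  GH_admissible Delta1 W s -> forall p q : W, mdist p q <= 2 * s.
Proof.
  intros [Z [f [g [Hf [Hg [_ H2]]]]]] p q.
  apply Rle_plus_epsilon. intros e He.
  destruct (H2 (g p) (ex_intro _ p eq_refl) (e/2) ltac:(lra)) as [z [[[] ->] Hp]].
  destruct (H2 (g q) (ex_intro _ q eq_refl) (e/2) ltac:(lra)) as [z [[[] ->] Hq]].
  rewrite <- (Hg p q).
  pose proof (mdist_tri Z (g p) (f tt) (g q)).
  rewrite (mdist_sym Z (g p) (f tt)) in *. lra.
Qed.

Lemma GH_admissible_point_of_diam_le (W : MetricSpace) s :
  inhabited W -> 0 < s -> (forall p q : W, mdist p q <= 2 * s) ->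
  GH_admissible Delta1 W s.
Proof.
  intros [w0] Hs Hdiam.
  assert (compat : glue_compatible unit_metric W 1 1 (fun _ _ => s)).
  { repeat split; simpl; intros; try lra.
    - pose proof (mdist_nonneg W y y'). lra.
    - specialize (Hdiam y y'). lra. }
  exists (glue_space _ _ 1 1 _ compat), inl, inr.
  repeat split; try (intros p q; simpl; ring).
  - intros z [x ->] e He. exists (inr w0). split; [eauto|]. simpl. lra.
  - intros z [y ->] e He. exists (inl tt). split; [eauto|]. simpl. lra.
Qed.

Lemma GH_dist_point_iff_diameter (W : MetricSpace) r : inhabited W -> 0 <= r ->
  is_GH_dist Delta1 W r <-> is_diameter W (2 * r).
Proof.
  intros HW Hr. split.
  - intros [Hlow Hgr]. split.
    + intros p q. enough (mdist p q / 2 <= r) by lra.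
      apply Hgr. intros s Hs. pose proof (GH_admissible_point_diam_le W s Hs p q). lra.
    + intros e He. apply NNPP. intros Hnone.
      assert (Hall : forall p q : W, mdist p q <= 2 * r - e).
      { intros p q. apply Rnot_lt_le. intros Hlt. apply Hnone. eauto. }
      destruct (Rlt_dec 0 (r - e/4)) as [Hp|Hp].
      * enough (r <= r - e/4) by lra.
        apply Hlow, GH_admissible_point_of_diam_le; auto.
        intros p q. specialize (Hall p q). lra.
      * destruct HW as [w0]. apply Hnone. exists w0, w0. rewrite mdist_refl. lra.
  - intros [Hdiam Hsup]. split.
    + intros s Hs. apply Rle_plus_epsilon. intros e He.
      destruct (Hsup (2*e) ltac:(lra)) as [p [q Hpq]].
      pose proof (GH_admissible_point_diam_le W s Hs p q). lra.
    + intros m Hm. apply Rle_plus_epsilon. intros e He.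
      apply Hm, GH_admissible_point_of_diam_le; auto; [lra|].
      intros p q. specialize (Hdiam p q). lra.
Qed.

Lemma GH_sphere_point_nonempty r : 0 <= r -> exists X : CMS, is_GH_dist Delta1 X r.
Proof.
  intros Hr. destruct (Req_dec r 0) as [->|Hr0].
  - exists Delta1. apply GH_dist_point_iff_diameter; [exact (inhabits tt)|lra|].
    split; simpl; intros; [lra|]. exists tt, tt. lra.
  - assert (compat : glue_compatible unit_metric unit_metric 1 1 (fun _ _ => 2 * r))
      by (repeat split; simpl; intros; lra).
    exists (glue_cms Delta1 Delta1 1 1 _ compat tt).
    apply GH_dist_point_iff_diameter; [exact (inhabits (inl tt))|lra|]. split.
    + intros [[]|[]] [[]|[]]; simpl; lra.
    + intros e He. exists (inl tt), (inr tt). simpl. lra.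
Qed.

Lemma isometric_of_diameter_zero (X Y : MetricSpace) :
  inhabited X -> inhabited Y -> is_diameter X 0 -> is_diameter Y 0 -> isometric X Y.
Proof.
  intros [x0] [y0] [HX _] [HY _].
  assert (EX : forall p q : X, p = q).
  { intros p q. apply (mdist_eq0 X).
    specialize (HX p q). pose proof (mdist_nonneg X p q). lra. }
  assert (EY : forall p q : Y, p = q).
  { intros p q. apply (mdist_eq0 Y).
    specialize (HY p q). pose proof (mdist_nonneg Y p q). lra. }
  exists (fun _ => y0), (fun _ => x0). repeat split.
  - intros p q. rewrite (EX p q), !mdist_refl. reflexivity.
  - intros x. apply EX.
  - intros y. apply EY.
Qed.

(** * The interpolating spaces *)

Lemma Rmin_le_shift K A A' e : 0 <= e -> A <= e + A' -> Rmin K A <= e + Rmin K A'.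
Proof. intros. unfold Rmin; destruct (Rle_dec K A), (Rle_dec K A'); lra. Qed.

Lemma Rmin_le_between K A A' e : A <= A' -> A' <= A + e ->
  Rmin K A <= Rmin K A' <= Rmin K A + e.
Proof. intros. unfold Rmin; destruct (Rle_dec K A), (Rle_dec K A'); lra. Qed.

Lemma Rmin_sum_ge K A B v : 0 <= A -> 0 <= B -> v <= K -> 0 <= K -> v <= A + B ->
  v <= Rmin K A + Rmin K B.
Proof. intros. unfold Rmin; destruct (Rle_dec K A), (Rle_dec K B); lra. Qed.

Section Interpolation.
Variables (X Y : CMS) (x0 : X) (y0 : Y) (r : R).
Hypothesis r_pos : 0 < r.
Hypothesis diamX : is_diameter X (2 * r).
Hypothesis diamY : is_diameter Y (2 * r).

Definition interp_cross (a b : R) (x : X) (y : Y) : R :=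
  Rmin (2 * r) (a * mdist x x0 + b * mdist y y0 + Rmin a b * r).

Lemma interp_compatible a b : 0 < a -> a <= 1 -> 0 < b -> b <= 1 ->
  glue_compatible X Y a b (interp_cross a b).
Proof.
  intros Ha Ha1 Hb Hb1. unfold interp_cross.
  pose proof (proj1 diamX) as HX. pose proof (proj1 diamY) as HY.
  assert (Hm : 0 < Rmin a b) by (apply Rmin_glb_lt; lra).
  repeat split; auto.
  - intros x y. apply Rmin_glb_lt; [lra|].
    pose proof (mdist_nonneg _ x x0). pose proof (mdist_nonneg _ y y0). nra.
  - intros x x' y. apply Rmin_le_shift.
    + pose proof (mdist_nonneg _ x x'). nra.
    + pose proof (mdist_tri _ x x' x0). nra.
  - intros x y y'. apply Rmin_le_shift.
    + pose proof (mdist_nonneg _ y y'). nra.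
    + pose proof (mdist_tri _ y y' y0). nra.
  - intros x x' y. pose proof (mdist_nonneg _ x x0). pose proof (mdist_nonneg _ x' x0).
    pose proof (mdist_nonneg _ y y0). pose proof (mdist_nonneg _ x x').
    pose proof (HX x x'). pose proof (mdist_tri _ x x0 x') as T.
    rewrite (mdist_sym _ x0 x') in T. apply Rmin_sum_ge; nra.
  - intros x y y'. pose proof (mdist_nonneg _ y y0). pose proof (mdist_nonneg _ y' y0).
    pose proof (mdist_nonneg _ x x0). pose proof (mdist_nonneg _ y y').
    pose proof (HY y y'). pose proof (mdist_tri _ y y0 y') as T.
    rewrite (mdist_sym _ y0 y') in T. apply Rmin_sum_ge; nra.
Qed.

Definition interp_space a b (compat : glue_compatible X Y a b (interp_cross a b)) : CMS :=
  glue_cms X Y a b _ compat x0.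

Lemma interp_space_diameter a b compat : a <= 1 -> b <= 1 -> a = 1 \/ b = 1 ->
  is_diameter (interp_space a b compat) (2 * r).
Proof.
  intros Ha1 Hb1 Hab. pose proof compat as [Ha [Hb _]].
  destruct diamX as [HX HXsup], diamY as [HY HYsup]. split.
  - intros [x|y] [x'|y']; simpl; unfold interp_cross; try apply Rmin_l.
    + pose proof (HX x x'). pose proof (mdist_nonneg _ x x'). nra.
    + pose proof (HY y y'). pose proof (mdist_nonneg _ y y'). nra.
  - intros e He. destruct Hab as [E|E].
    + destruct (HXsup e He) as [p [q Hpq]]. exists (inl p), (inl q). simpl. rewrite E. lra.
    + destruct (HYsup e He) as [p [q Hpq]]. exists (inr p), (inr q). simpl. rewrite E. lra.
Qed.

Lemma interp_space_close a b a' b' compat compat' s :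
  a <= a' -> b <= b' -> 0 < s -> 3 * r * ((a' - a) + (b' - b)) <= s ->
  GH_admissible (interp_space a b compat) (interp_space a' b' compat') s.
Proof.
  intros Haa Hbb Hs Hab. pose proof compat as [Ha [Hb _]].
  pose proof (proj1 diamX) as HX. pose proof (proj1 diamY) as HY.
  apply (GH_admissible_of_expanding_bijection (interp_space a b compat)
           (interp_space a' b' compat') (fun p : X + Y => p) (fun p : X + Y => p)); auto.
  assert (Hmin : Rmin a b <= Rmin a' b' <= Rmin a b + ((a' - a) + (b' - b)))
    by (unfold Rmin; destruct (Rle_dec a b), (Rle_dec a' b'); lra).
  assert (Hcross : forall x y, interp_cross a b x y <= interp_cross a' b' x y <=
                                interp_cross a b x y + s).
  { intros x y. apply Rmin_le_between;
      pose proof (HX x x0); pose proof (mdist_nonneg _ x x0);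
      pose proof (HY y y0); pose proof (mdist_nonneg _ y y0); nra. }
  intros [x|y] [x'|y']; simpl; try apply Hcross.
  - pose proof (HX x x'). pose proof (mdist_nonneg _ x x'). split; nra.
  - pose proof (HY y y'). pose proof (mdist_nonneg _ y y'). split; nra.
Qed.

Lemma interp_space_near_left b compat : b <= 1 ->
  GH_admissible X (interp_space 1 b compat) (3 * r * b).
Proof.
  intros Hb1. pose proof compat as [_ [Hb _]]. pose proof (proj1 diamY) as HY.
  apply (GH_admissible_of_embedding X (interp_space 1 b compat) (fun x : X => inl x)).
  - intros p q. simpl. ring.
  - nra.
  - intros [x|y].
    + exists x. simpl. rewrite mdist_refl. nra.
    + exists x0. simpl. unfold interp_cross. rewrite mdist_refl.
      pose proof (HY y y0). pose proof (mdist_nonneg _ y y0).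
      assert (Rmin 1 b <= b) by apply Rmin_r.
      eapply Rle_trans; [apply Rmin_r|]. nra.
Qed.

Lemma interp_space_near_right a compat : a <= 1 ->
  GH_admissible Y (interp_space a 1 compat) (3 * r * a).
Proof.
  intros Ha1. pose proof compat as [Ha _]. pose proof (proj1 diamX) as HX.
  apply (GH_admissible_of_embedding Y (interp_space a 1 compat) (fun y : Y => inr y)).
  - intros p q. simpl. ring.
  - nra.
  - intros [x|y].
    + exists y0. simpl. unfold interp_cross. rewrite mdist_refl.
      pose proof (HX x x0). pose proof (mdist_nonneg _ x x0).
      assert (Rmin a 1 <= a) by apply Rmin_l.
      eapply Rle_trans; [apply Rmin_r|]. nra.
    + exists y. simpl. rewrite mdist_refl. nra.
Qed.

Definition scaleX t := Rmin 1 (3 - 3 * t).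
Definition scaleY t := Rmin 1 (3 * t).

Lemma scales_range t : 0 < t < 1 ->
  0 < scaleX t <= 1 /\ 0 < scaleY t <= 1 /\ (scaleX t = 1 \/ scaleY t = 1).
Proof.
  intros. unfold scaleX, scaleY, Rmin.
  destruct (Rle_dec 1 (3 - 3*t)), (Rle_dec 1 (3*t)); lra.
Qed.

(* Within distance 1/6 one of the two scales is 1 at both times, so the other
   one decides the direction of the comparison. *)
Lemma scales_comparable s t : 0 < s < 1 -> 0 < t < 1 -> Rabs (s - t) < 1/6 ->
  (scaleX s <= scaleX t /\ scaleY s <= scaleY t /\
     (scaleX t - scaleX s) + (scaleY t - scaleY s) <= 3 * Rabs (s - t)) \/
  (scaleX t <= scaleX s /\ scaleY t <= scaleY s /\
     (scaleX s - scaleX t) + (scaleY s - scaleY t) <= 3 * Rabs (s - t)).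
Proof.
  intros. unfold scaleX, scaleY, Rmin, Rabs in *.
  destruct (Rcase_abs (s - t)), (Rle_dec 1 (3 - 3*t)), (Rle_dec 1 (3*t)),
    (Rle_dec 1 (3 - 3*s)), (Rle_dec 1 (3*s)); lra.
Qed.

Lemma interp_compatible_path t (t_pos : ~ t <= 0) (t_lt1 : ~ 1 <= t) :
  glue_compatible X Y (scaleX t) (scaleY t) (interp_cross (scaleX t) (scaleY t)).
Proof.
  destruct (scales_range t ltac:(lra)) as [[? ?] [[? ?] _]].
  now apply interp_compatible.
Qed.

Definition interp_path (t : R) : CMS :=
  match Rle_dec t 0 with
  | left _ => X
  | right t_pos =>
      match Rle_dec 1 t with
      | left _ => Y
      | right t_lt1 =>
          interp_space (scaleX t) (scaleY t) (interp_compatible_path t t_pos t_lt1)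
      end
  end.

Lemma interp_path_left t : t <= 0 -> interp_path t = X.
Proof. intros Ht. unfold interp_path. now destruct (Rle_dec t 0). Qed.

Lemma interp_path_right t : 1 <= t -> interp_path t = Y.
Proof.
  intros Ht. unfold interp_path.
  destruct (Rle_dec t 0); [lra|]. now destruct (Rle_dec 1 t).
Qed.

Lemma interp_path_inner t : 0 < t < 1 ->
  exists compat, interp_path t = interp_space (scaleX t) (scaleY t) compat.
Proof.
  intros Ht. unfold interp_path.
  destruct (Rle_dec t 0); [lra|]. destruct (Rle_dec 1 t); [lra|]. eauto.
Qed.

Lemma interp_path_in_sphere t : 0 <= t <= 1 -> is_GH_dist Delta1 (interp_path t) r.
Proof.
  intros Ht.
  apply GH_dist_point_iff_diameter; [apply cms_inhabited|lra|].
  destruct (Rle_dec t 0) as [Ht0|Ht0]; [now rewrite interp_path_left|].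
  destruct (Rle_dec 1 t) as [Ht1|Ht1]; [now rewrite interp_path_right|].
  destruct (interp_path_inner t ltac:(lra)) as [compat ->].
  destruct (scales_range t ltac:(lra)) as [[_ ?] [[_ ?] ?]].
  now apply interp_space_diameter.
Qed.

Lemma interp_path_continuous_left : GH_continuous_at interp_path 0.
Proof.
  intros eps He.
  exists (Rmin (1/6) (eps / (20 * r))). split.
  { apply Rmin_glb_lt; [lra|apply Rdiv_lt_0_compat; lra]. }
  intros s Hs Hst. apply Rabs_def2 in Hst.
  pose proof (Rmin_l (1/6) (eps / (20 * r))). pose proof (Rmin_r (1/6) (eps / (20 * r))).
  assert (Hs1 : s < 1/6) by lra.
  assert (Hs2 : s < eps / (20 * r)) by lra.
  rewrite (interp_path_left 0) by lra.
  destruct (Rle_dec s 0) as [Hs0|Hs0].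
  { rewrite interp_path_left by lra. now apply GH_dist_self_lt. }
  destruct (interp_path_inner s ltac:(lra)) as [compat ->].
  assert (EX : scaleX s = 1) by (unfold scaleX, Rmin; destruct (Rle_dec 1 (3 - 3*s)); lra).
  revert compat. rewrite EX. intros compat.
  apply (GH_dist_lt_of_admissible _ _ (3 * r * scaleY s)).
  - apply GH_admissible_sym, interp_space_near_left.
    now destruct (scales_range s ltac:(lra)) as [_ [[_ ?] _]].
  - assert (scaleY s <= 3 * s) by apply Rmin_r.
    assert (eps / (20 * r) * (20 * r) = eps) by (field; lra). nra.
Qed.

Lemma interp_path_continuous_right : GH_continuous_at interp_path 1.
Proof.
  intros eps He.
  exists (Rmin (1/6) (eps / (20 * r))). split.
  { apply Rmin_glb_lt; [lra|apply Rdiv_lt_0_compat; lra]. }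
  intros s Hs Hst. apply Rabs_def2 in Hst.
  pose proof (Rmin_l (1/6) (eps / (20 * r))). pose proof (Rmin_r (1/6) (eps / (20 * r))).
  assert (Hs1 : 1 - s < 1/6) by lra.
  assert (Hs2 : 1 - s < eps / (20 * r)) by lra.
  rewrite (interp_path_right 1) by lra.
  destruct (Rle_dec 1 s) as [Hs0|Hs0].
  { rewrite interp_path_right by lra. now apply GH_dist_self_lt. }
  destruct (interp_path_inner s ltac:(lra)) as [compat ->].
  assert (EY : scaleY s = 1) by (unfold scaleY, Rmin; destruct (Rle_dec 1 (3*s)); lra).
  revert compat. rewrite EY. intros compat.
  apply (GH_dist_lt_of_admissible _ _ (3 * r * scaleX s)).
  - apply GH_admissible_sym, interp_space_near_right.
    now destruct (scales_range s ltac:(lra)) as [[_ ?] _].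
  - assert (scaleX s <= 3 - 3 * s) by apply Rmin_r.
    assert (eps / (20 * r) * (20 * r) = eps) by (field; lra). nra.
Qed.

Lemma interp_path_continuous_inner t : 0 < t < 1 -> GH_continuous_at interp_path t.
Proof.
  intros Ht eps He.
  pose (delta := Rmin (Rmin (1/6) (eps / (40 * r))) (Rmin t (1 - t))).
  assert (Hdelta : 0 < delta).
  { repeat apply Rmin_glb_lt; try lra. apply Rdiv_lt_0_compat; lra. }
  assert (Hd1 : delta <= 1/6)
    by (eapply Rle_trans; [apply Rmin_l|apply Rmin_l]).
  assert (Hd2 : delta <= eps / (40 * r))
    by (eapply Rle_trans; [apply Rmin_l|apply Rmin_r]).
  assert (Hd3 : delta <= t) by (eapply Rle_trans; [apply Rmin_r|apply Rmin_l]).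
  assert (Hd4 : delta <= 1 - t) by (eapply Rle_trans; [apply Rmin_r|apply Rmin_r]).
  exists delta. split; [exact Hdelta|]. intros s Hs Hst.
  assert (Hs' : 0 < s < 1) by (apply Rabs_def2 in Hst; lra).
  destruct (interp_path_inner s Hs') as [compat_s ->].
  destruct (interp_path_inner t Ht) as [compat_t ->].
  assert (E40 : eps / (40 * r) * (40 * r) = eps) by (field; lra).
  assert (Hs18 : 0 < 18 * r * delta) by nra.
  apply (GH_dist_lt_of_admissible _ _ (18 * r * delta)); [|nra].
  destruct (scales_comparable s t Hs' Ht ltac:(lra)) as [[Ha [Hb Hab]]|[Ha [Hb Hab]]].
  - apply interp_space_close; auto. nra.
  - apply GH_admissible_sym, interp_space_close; auto. nra.
Qed.

Lemma interp_path_GH_path : GH_path (fun W => is_GH_dist Delta1 W r) X Y.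
Proof.
  exists interp_path. split; [|split; [|split]].
  - rewrite interp_path_left by lra. apply isometric_refl.
  - rewrite interp_path_right by lra. apply isometric_refl.
  - exact interp_path_in_sphere.
  - intros t Ht.
    destruct (Req_dec t 0) as [->|Ht0]; [exact interp_path_continuous_left|].
    destruct (Req_dec t 1) as [->|Ht1]; [exact interp_path_continuous_right|].
    apply interp_path_continuous_inner. lra.
Qed.

End Interpolation.

Theorem corollary2 (r : R) (hr : 0 <= r) :
  (exists X : CMS, is_GH_dist Delta1 X r) /\
  (forall X Y : CMS, is_GH_dist Delta1 X r -> is_GH_dist Delta1 Y r ->
     GH_path (fun W => is_GH_dist Delta1 W r) X Y).
Proof.
  split; [exact (GH_sphere_point_nonempty r hr)|].
  intros X Y HX HY.
  pose proof (proj1 (GH_dist_point_iff_diameter X r (cms_inhabited X) hr) HX) as diamX.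
  pose proof (proj1 (GH_dist_point_iff_diameter Y r (cms_inhabited Y) hr) HY) as diamY.
  destruct (Req_dec r 0) as [Er|Hr].
  - apply GH_path_of_isometric; [exact HX|].
    rewrite Er, Rmult_0_r in diamX, diamY.
    exact (isometric_of_diameter_zero X Y (cms_inhabited X) (cms_inhabited Y) diamX diamY).
  - destruct (cms_inhabited X) as [x0], (cms_inhabited Y) as [y0].
    apply (interp_path_GH_path X Y x0 y0 r); [lra|exact diamX|exact diamY].
Qed.
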